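(* Let $E$, $s$ and $\mathrm{Rel}(s,\cdot)$ be as follows, and let $\mathcal{I}$ be the layout-constraint family below. Let $T^*\in\arg\max_{T\in\mathcal{I}}\mathrm{Rel}(s,T)$ and let $\hat T$ be the output of the algorithm GreedyTimeline: start with $\hat T=\emptyset$; repeatedly let $C=\{e\in E\setminus\hat T:\hat T\cup\{e\}\in\mathcal{I}\}$ and, if $C\neq\emptyset$, add to $\hat T$ an element $e\in C$ maximizing the marginal gain $\mathrm{Rel}(s,\hat T\cup\{e\})-\mathrm{Rel}(s,\hat T)$; stop when $C=\emptyset$ and return $\hat T$. Then $\mathrm{Rel}(s,\hat T)\ge \tfrac13\,\mathrm{Rel}(s,T^* )$, for any subject $s$.
   Context: Events: $\mathcal{E}$ is a finite set of events over all subjects; $E\subseteq\mathcal{E}$ is the finite set of candidate events of subject $s$. Each event $e$ has a subject $\mathrm{Sub}(e)$, a related entity $\mathrm{RE}(e)$, a timestamp $\tau(e)\in\mathbb{R}$, an entity path $\pi_{RE}(e)$ and a time path $\pi_\tau(e)$. Nonnegative scores $\mathrm{E2ECooc}(x,y)\ge0$ (entity–entity), $\mathrm{E2DCooc}(x,t)\ge0$ (entity–date) and $\mathrm{GlobalImportance}(re)\ge0$ are given. With $0\le\lambda\le1$ and $w^e_1,w^e_2,w^e_3,w^d_1,w^d_2\ge0$, $\mathrm{Rel}(s,T)=\lambda(w^e_1\mathrm{E2E}(s,T)+w^e_2\mathrm{E2EPath}(T)+w^e_3\mathrm{G2E}(T))+(1-\lambda)(w^d_1\mathrm{E2D}(s,T)+w^d_2\mathrm{E2DPath}(T))$,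 where $\mathrm{E2E}(s,T)=\sum_{re\in\{\mathrm{RE}(e):e\in T\}}\mathrm{E2ECooc}(s,re)$, $\mathrm{G2E}(T)=\sum_{re\in\{\mathrm{RE}(e):e\in T\}}\mathrm{GlobalImportance}(re)$, $\mathrm{E2EPath}(T)=\sum_{p\in\{\pi_{RE}(e):e\in T\}}\operatorname{average}_{e\in\mathcal{E},\pi_{RE}(e)=p}\mathrm{E2ECooc}(\mathrm{Sub}(e),\mathrm{RE}(e))$, $\mathrm{E2D}(s,T)=\sum_{t\in\{\tau(e):e\in T\}}\mathrm{E2DCooc}(s,t)$, $\mathrm{E2DPath}(T)=\sum_{p\in\{\pi_\tau(e):e\in T\}}\operatorname{average}_{e\in\mathcal{E},\pi_\tau(e)=p}\mathrm{E2DCooc}(\mathrm{Sub}(e),\tau(e))$; all sums are over sets (each distinct value counted once). Layout constraint: fix a real $t_w>0$ and an integer $n\ge1$; $\mathcal{I}$ is the family of all $T\subseteq E$ with $|\{e\in T:\tau(e)\in[t,t+t_w)\}|\le n$ for every $t\in\mathbb{R}$. *)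

From HB Require Import structures.
From mathcomp Require Import all_boot all_order all_algebra.
Set Implicit Arguments. Unset Strict Implicit. Unset Printing Implicit Defensive.
Import Order.TTheory GRing.Theory Num.Theory.
Local Open Scope ring_scope.

Section Relevance.
Variables (R : realFieldType) (Ev : finType) (Ent PRE PT : eqType).
(* Ev : the finite set of all events (curly E); Ent : entities (subjects and
   related entities); PRE / PT : entity paths / time paths *)
Variables (Sub RE : Ev -> Ent) (tau : Ev -> R) (piRE : Ev -> PRE) (piT : Ev -> PT).
Variables (E2ECooc : Ent -> Ent -> R) (E2DCooc : Ent -> R -> R) (GlobalImportance : Ent -> R).

Definition E2E (s : Ent) (T : {set Ev}) : R :=
  \sum_(re <- undup [seq RE e | e <- enum T]) E2ECooc s re.

Definition G2E (T : {set Ev}) : R :=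
  \sum_(re <- undup [seq RE e | e <- enum T]) GlobalImportance re.

Definition avgE2EPath (p : PRE) : R :=
  (\sum_(e | piRE e == p) E2ECooc (Sub e) (RE e)) / #|[pred e | piRE e == p]|%:R.

Definition E2EPath (T : {set Ev}) : R :=
  \sum_(p <- undup [seq piRE e | e <- enum T]) avgE2EPath p.

Definition E2D (s : Ent) (T : {set Ev}) : R :=
  \sum_(t <- undup [seq tau e | e <- enum T]) E2DCooc s t.

Definition avgE2DPath (p : PT) : R :=
  (\sum_(e | piT e == p) E2DCooc (Sub e) (tau e)) / #|[pred e | piT e == p]|%:R.

Definition E2DPath (T : {set Ev}) : R :=
  \sum_(p <- undup [seq piT e | e <- enum T]) avgE2DPath p.

Variables (lambda we1 we2 we3 wd1 wd2 : R).

Definition Rel (s : Ent) (T : {set Ev}) : R :=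
  lambda * (we1 * E2E s T + we2 * E2EPath T + we3 * G2E T)
  + (1 - lambda) * (wd1 * E2D s T + wd2 * E2DPath T).

End Relevance.

Definition layoutI (R : realFieldType) (Ev : finType) (tau : Ev -> R)
  (tw : R) (n : nat) (E T : {set Ev}) : Prop :=
  T \subset E /\
  forall t : R, (#|[set e in T | (t <= tau e)%R && (tau e < t + tw)%R]| <= n)%N.

(* l is the sequence of elements added by a run of the greedy algorithm
   (with arbitrary tie-breaking) maximizing the marginal gain of f over the
   independence family indep on ground set E; the output is [set x in l]. *)
Definition greedy_run (R : realFieldType) (Ev : finType) (E : {set Ev})
  (indep : {set Ev} -> Prop) (f : {set Ev} -> R) (l : seq Ev) : Prop :=
  (forall pre e post, l = pre ++ e :: post ->
     [/\ e \in E, e \notin [set x in pre], indep (e |: [set x in pre]) &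
       forall e', e' \in E -> e' \notin [set x in pre] ->
         indep (e' |: [set x in pre]) ->
         f (e' |: [set x in pre]) - f [set x in pre]
           <= f (e |: [set x in pre]) - f [set x in pre]]) /\
  (forall e, e \in E -> e \notin [set x in l] -> ~ indep (e |: [set x in l])).

(* Rel(s, .) is a nonnegative combination of weighted coverage functions, hence
   monotone and submodular, and Rel(s, {}) = 0.  The layout family is down-closed
   and 2-extendible: if x can be added to a feasible A, then A :|: O becomes
   feasible with x after dropping from O only its two elements nearest to x in
   time, one on each side, since windows are intervals and so every window
   containing x and meeting O contains one of them.  For a k-extendible family,
   greedy is a 1/(k+1)-approximation of a monotone submodular function: each greedy
   step can be paid for by discarding at most k elements of T*, whose marginal
   gains are bounded by the gain of that step, and at the end the remaining part
   of T* contributes nothing. *)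

From HB Require Import structures.
From mathcomp Require Import all_boot all_order all_algebra.
From mathcomp Require Import lra.
Import Order.TTheory GRing.Theory Num.Theory.
Set Implicit Arguments. Unset Strict Implicit. Unset Printing Implicit Defensive.
Local Open Scope ring_scope.

Section SetFunctions.
Variables (R : realFieldType) (Ev : finType).
Implicit Types (f g : {set Ev} -> R) (A B G S T : {set Ev}).

Definition set_monotone f := forall A x, f A <= f (x |: A).

Definition submodular f := forall A B x, A \subset B ->
  f (x |: B) - f B <= f (x |: A) - f A.

Lemma set_monotoneD f g :
  set_monotone f -> set_monotone g -> set_monotone (fun T => f T + g T).
Proof. by move=> mf mg A x; apply: lerD. Qed.

Lemma set_monotoneZ (c : R) f :
  0 <= c -> set_monotone f -> set_monotone (fun T => c * f T).
Proof. by move=> c0 mf A x; apply: ler_wpM2l. Qed.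

Lemma submodularD f g :
  submodular f -> submodular g -> submodular (fun T => f T + g T).
Proof. by move=> sf sg A B x AB; have := sf _ _ x AB; have := sg _ _ x AB; lra. Qed.

Lemma submodularZ (c : R) f :
  0 <= c -> submodular f -> submodular (fun T => c * f T).
Proof. by move=> c0 sf A B x AB; rewrite -!mulrBr; apply: ler_wpM2l (sf _ _ _ AB). Qed.

Lemma set_monotone_subset f A B : set_monotone f -> A \subset B -> f A <= f B.
Proof.
move=> mf AB; rewrite -(setUidPr AB) -[B]set_enum.
elim: (enum B) => [|b s IH]; first by rewrite set_nil setU0.
by rewrite set_cons setUCA; apply: le_trans IH (mf _ _).
Qed.

Lemma submodular_union_le f S G : submodular f ->
  f (S :|: G) <= f G + \sum_(o in S) (f (o |: G) - f G).
Proof.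
move=> sf; rewrite -big_enum -{1}(set_enum S) /=.
elim: (enum S) => [|a s IH]; first by rewrite big_nil addr0 set_nil set0U.
rewrite set_cons -setUA big_cons.
have := sf _ _ a (subsetUr [set x in s] G); lra.
Qed.

End SetFunctions.

Section Coverage.
Variables (R : realFieldType) (Ev : finType) (V : eqType).
Variables (phi : Ev -> V) (w : V -> R).

Definition coverage (T : {set Ev}) : R :=
  \sum_(v <- undup [seq phi e | e <- enum T]) w v.

Lemma coverageU1 T x : coverage (x |: T) =
  coverage T + (phi x \notin [seq phi e | e <- enum T])%:R * w (phi x).
Proof.
have enumU1 : enum (x |: T) =i x :: enum T.
  by move=> y; rewrite mem_enum !inE mem_enum.
rewrite /coverage (perm_big _ (perm_undup (eq_mem_map phi enumU1))) /=.
by case: ifP => _; rewrite ?mul0r ?addr0 // big_cons mul1r addrC.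
Qed.

Hypothesis w_ge0 : forall v, 0 <= w v.

Lemma coverage_monotone : set_monotone coverage.
Proof. by move=> T x; rewrite coverageU1 lerDl mulr_ge0. Qed.

Lemma coverage_submodular : submodular coverage.
Proof.
move=> A B x AB; rewrite !coverageU1 ![coverage _ + _]addrC !addrK.
have mapAB : phi x \in [seq phi e | e <- enum A] ->
             phi x \in [seq phi e | e <- enum B].
  by move=> /mapP[e eA ->]; rewrite map_f // mem_enum (subsetP AB) // -mem_enum.
apply: ler_wpM2r => //; rewrite ler_nat.
by case: (phi x \in [seq _ | _ <- enum A]) mapAB => [/(_ isT) -> | _]; rewrite ?leq_b1.
Qed.

End Coverage.

Section RelevanceProperties.
Variables (R : realFieldType) (Ev : finType) (Ent PRE PT : eqType).
Variables (Sub RE : Ev -> Ent) (tau : Ev -> R) (piRE : Ev -> PRE) (piT : Ev -> PT).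
Variables (E2ECooc : Ent -> Ent -> R) (E2DCooc : Ent -> R -> R) (GlobalImportance : Ent -> R).
Variables (lambda we1 we2 we3 wd1 wd2 : R) (s : Ent).
Hypotheses (E2ECooc_ge0 : forall x y, 0 <= E2ECooc x y)
  (E2DCooc_ge0 : forall x t, 0 <= E2DCooc x t)
  (GlobalImportance_ge0 : forall x, 0 <= GlobalImportance x).
Hypotheses (lambda_ge0 : 0 <= lambda) (lambda_le1 : lambda <= 1).
Hypotheses (we1_ge0 : 0 <= we1) (we2_ge0 : 0 <= we2) (we3_ge0 : 0 <= we3)
  (wd1_ge0 : 0 <= wd1) (wd2_ge0 : 0 <= wd2).

Local Notation Rel_s := (Rel Sub RE tau piRE piT E2ECooc E2DCooc GlobalImportance
  lambda we1 we2 we3 wd1 wd2 s).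

Lemma avgE2EPath_ge0 p : 0 <= avgE2EPath Sub RE piRE E2ECooc p.
Proof. by rewrite divr_ge0 ?sumr_ge0. Qed.

Lemma avgE2DPath_ge0 p : 0 <= avgE2DPath Sub tau piT E2DCooc p.
Proof. by rewrite divr_ge0 ?sumr_ge0. Qed.

Let one_sub_lambda_ge0 : 0 <= 1 - lambda. Proof. by rewrite subr_ge0. Qed.

Lemma Rel_monotone : set_monotone Rel_s.
Proof.
do ![apply: set_monotoneD | apply: set_monotoneZ => //];
  apply: coverage_monotone => //; [exact: avgE2EPath_ge0 | exact: avgE2DPath_ge0].
Qed.

Lemma Rel_submodular : submodular Rel_s.
Proof.
do ![apply: submodularD | apply: submodularZ => //];
  apply: coverage_submodular => //; [exact: avgE2EPath_ge0 | exact: avgE2DPath_ge0].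
Qed.

Lemma Rel_set0 : Rel_s set0 = 0.
Proof.
by rewrite /Rel /E2E /E2EPath /G2E /E2D /E2DPath enum_set0 !big_nil !(mulr0, addr0).
Qed.

End RelevanceProperties.

Section IndependenceSystems.
Variable Ev : finType.

Definition down_closed (I : {set Ev} -> Prop) :=
  forall T T' : {set Ev}, T \subset T' -> I T' -> I T.

Definition extendible (k : nat) (I : {set Ev} -> Prop) :=
  forall A O x, I (A :|: O) -> I (x |: A) ->
  exists2 Z : {set Ev}, Z \subset O /\ (#|Z| <= k)%N & I (x |: (A :|: (O :\: Z))).

End IndependenceSystems.

Section Layout.
Variables (R : realFieldType) (Ev : finType).
Variables (tau : Ev -> R) (tw : R) (n : nat) (E : {set Ev}).
Local Notation I := (layoutI tau tw n E).
Local Notation window T t := [set e in T | t <= tau e < t + tw].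

Lemma exists_max_subset (g : Ev -> R) (L : {set Ev}) :
  exists2 Z : {set Ev}, Z \subset L /\ (#|Z| <= 1)%N &
    forall o, o \in L -> exists2 z, z \in Z & g o <= g z.
Proof.
have [->|[i0 Li0]] := set_0Vmem L.
  by exists set0 => [|o]; rewrite ?sub0set ?cards0 ?inE.
case: (arg_maxP (P := mem L) g Li0) => z Lz zmax.
exists [set z] => [|o Lo]; first by rewrite sub1set cards1.
by exists z; [rewrite set11 | exact: zmax].
Qed.

Lemma layoutI_down_closed : down_closed I.
Proof.
move=> T T' TT' [T'E T'n]; split; first exact: subset_trans T'E.
move=> t; apply: leq_trans (T'n t); apply: subset_leq_card.
by apply/subsetP => y; rewrite !inE => /andP[/(subsetP TT') -> ->].
Qed.

Lemma nearest_hit_windows (O : {set Ev}) x :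
  exists2 Z : {set Ev}, Z \subset O /\ (#|Z| <= 2)%N &
    forall t o, o \in O -> t <= tau o < t + tw -> t <= tau x < t + tw ->
    exists2 z, z \in Z & t <= tau z < t + tw.
Proof.
have [Zl [Zl_sub Zl_card] Zl_max] := exists_max_subset tau [set o in O | tau o <= tau x].
have [Zr [Zr_sub Zr_card] Zr_min] :=
  exists_max_subset (fun e => - tau e) [set o in O | tau x <= tau o].
exists (Zl :|: Zr).
  split; last by rewrite (leq_trans (leq_card_setU _ _)) // (leq_add Zl_card Zr_card).
  rewrite subUset; apply/andP.
  by split; [apply: subset_trans Zl_sub _ | apply: subset_trans Zr_sub _];
    apply/subsetP => y; rewrite inE => /andP[].
move=> t o Oo /andP[to ot] /andP[tx xt].
have [ox|/ltW xo] := leP (tau o) (tau x).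
- have /Zl_max[z zZ oz] : o \in [set o in O | tau o <= tau x] by rewrite inE Oo ox.
  have := subsetP Zl_sub z zZ; rewrite inE => /andP[_ zx].
  by exists z; rewrite ?inE ?zZ // (le_trans to oz) (le_lt_trans zx xt).
- have /Zr_min[z zZ /[!lerN2] zo] : o \in [set o in O | tau x <= tau o] by rewrite inE Oo xo.
  have := subsetP Zr_sub z zZ; rewrite inE => /andP[_ xz].
  by exists z; rewrite ?inE ?zZ ?orbT // (le_trans tx xz) (le_lt_trans zo ot).
Qed.

Lemma layoutI_extendible : extendible 2 I.
Proof.
move=> A O x [AOE AOn] [xAE xAn].
have [Z [ZOA Z2] Zhit] := nearest_hit_windows (O :\: A) x.
have ZO : Z \subset O by apply: subset_trans ZOA (subsetDl _ _).
exists Z => //; split.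
  have sub : x |: (A :|: (O :\: Z)) \subset (x |: A) :|: (A :|: O).
    by apply/subsetP => y; rewrite !inE => /or3P[->|->|/andP[_ ->]]; rewrite ?orbT.
  by rewrite (subset_trans sub) // subUset xAE AOE.
move=> t; case xt: (t <= tau x < t + tw); last first.
  apply: leq_trans (AOn t); apply: subset_leq_card; apply/subsetP => y.
  rewrite !inE => /andP[/or3P[/eqP->|yA|/andP[_ yO]] yt]; first by rewrite xt in yt.
    by rewrite yA yt.
  by rewrite yO orbT yt.
case: (boolP [exists o in O :\: A, t <= tau o < t + tw]) => [/exists_inP[o oOA ot]|none].
  have [z zZ zt] := Zhit t o oOA ot xt.
  have [zA zO] : z \notin A /\ z \in O by move: (subsetP ZOA z zZ); rewrite inE => /andP[].
  have := AOn t; rewrite (cardsD1 z) !inE zO orbT zt /=; apply: leq_trans.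
  apply: (@leq_trans #|x |: (window (A :|: O) t :\ z)|).
    apply: subset_leq_card; apply/subsetP => y.
    rewrite !inE => /andP[/or3P[->//|yA|/andP[yZ yO]] ->]; rewrite andbT.
      by rewrite yA andbT; apply/orP; right; apply: contraNneq zA => <-.
    by rewrite yO orbT andbT; apply/orP; right; apply: contraNneq yZ => ->.
  by rewrite cardsU1 leq_add2r leq_b1.
apply: leq_trans (xAn t); apply: subset_leq_card; apply/subsetP => y.
rewrite !inE => /andP[yxAO yt]; rewrite yt andbT.
case/or3P: yxAO => [->//|->|/andP[_ yO]]; rewrite ?orbT //.
have [yA|yA] := boolP (y \in A); first by apply/orP; right.
suff : [exists o in O :\: A, t <= tau o < t + tw] by rewrite (negbTE none).
by apply/exists_inP; exists y; rewrite // !inE yA yO.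
Qed.

End Layout.

Section Greedy.
Variables (R : realFieldType) (Ev : finType) (E : {set Ev}).
Variables (I : {set Ev} -> Prop) (f : {set Ev} -> R) (k : nat).
Hypotheses (f_monotone : set_monotone f) (f_submodular : submodular f).
Hypotheses (I_down_closed : down_closed I) (I_extendible : extendible k I).
Variables (l : seq Ev) (Tstar : {set Ev}).
Hypotheses (l_greedy : greedy_run E I f l) (Tstar_I : I Tstar) (Tstar_sub : Tstar \subset E).

Local Notation G := [set x in l].
Local Notation gain o := (f (o |: G) - f G).

Lemma greedy_exchange p e post (O : {set Ev}) :
  l = p ++ e :: post -> O \subset Tstar -> I ([set x in p] :|: O) ->
  exists2 O' : {set Ev}, O' \subset O /\ I ([set x in rcons p e] :|: O') &
    \sum_(o in O) gain o <= \sum_(o in O') gain o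
                            + k%:R * (f [set x in rcons p e] - f [set x in p]).
Proof.
move=> l_def OT pOI; set A := [set x in p] in pOI *.
have [_ _ eAI e_max] := l_greedy.1 _ _ _ l_def.
have AG : A \subset G by apply/subsetP => y; rewrite !inE l_def mem_cat => ->.
have peA : [set x in rcons p e] = e |: A by apply/setP => y; rewrite !inE mem_rcons inE.
have [Z [ZO Zk] eAOZI] := I_extendible pOI eAI.
exists (O :\: Z); first by split; [exact: subsetDl | rewrite peA -setUA].
(* Every dropped z was a feasible alternative to e when e was chosen. *)
have gain_Z z : z \in Z -> gain z <= f (e |: A) - f A.
  move=> zZ; apply: le_trans (f_submodular z AG) _.
  have [zA|zA] := boolP (z \in A).
    by rewrite (setUidPr _) ?sub1set // subrr subr_ge0.
  have zO := subsetP ZO z zZ.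
  apply: e_max => //; first by rewrite (subsetP Tstar_sub) ?(subsetP OT).
  by apply: I_down_closed pOI; rewrite subUset subsetUl sub1set inE zO orbT.
rewrite peA (big_setID Z) /= (setIidPr ZO) addrC lerD2l.
apply: le_trans (ler_sum _ gain_Z) _.
by rewrite sumr_const -[_ *+ #|Z|]mulr_natl; apply: ler_wpM2r; rewrite ?subr_ge0 ?ler_nat.
Qed.

Lemma greedy_prefix_invariant p post : l = p ++ post ->
  exists2 O : {set Ev}, O \subset Tstar /\ I ([set x in p] :|: O) &
    \sum_(o in Tstar) gain o <= \sum_(o in O) gain o
                                + k%:R * (f [set x in p] - f set0).
Proof.
elim/last_ind: p post => [|p e IH] post l_def.
  by exists Tstar; rewrite ?set_nil ?set0U ?subrr ?mulr0 ?addr0.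
have l_def' : l = p ++ e :: post by rewrite l_def cat_rcons.
have [O [OT pOI] le_gain] := IH _ l_def'.
have [O' [O'O peO'I] le_gain'] := greedy_exchange l_def' OT pOI.
exists O'; first by split=> //; apply: subset_trans OT.
by move: le_gain le_gain'; lra.
Qed.

Theorem greedy_approximation :
  f Tstar <= k.+1%:R * f G - k%:R * f set0.
Proof.
have [O [OT GOI] le_gain] := greedy_prefix_invariant (esym (cats0 l)).
have gain_O : \sum_(o in O) gain o = 0.
  apply: big1 => o oO; have [oG|oG] := boolP (o \in G).
    by rewrite (setUidPr _) ?sub1set // subrr.
  have oE : o \in E by rewrite (subsetP Tstar_sub) ?(subsetP OT).
  case: (l_greedy.2 o oE oG); apply: I_down_closed GOI.
  by rewrite subUset subsetUl sub1set inE oO orbT.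
have le_union := set_monotone_subset f_monotone (subsetUl Tstar G).
have := submodular_union_le Tstar G f_submodular.
move: le_gain le_union; rewrite gain_O add0r -addn1 natrD; lra.
Qed.

End Greedy.

Theorem theorem3 (R : realFieldType) (Ev : finType) (Ent PRE PT : eqType)
  (Sub RE : Ev -> Ent) (tau : Ev -> R) (piRE : Ev -> PRE) (piT : Ev -> PT)
  (E2ECooc : Ent -> Ent -> R) (E2DCooc : Ent -> R -> R)
  (GlobalImportance : Ent -> R)
  (lambda we1 we2 we3 wd1 wd2 : R) (tw : R) (n : nat)
  (E : {set Ev}) (s : Ent) (Tstar : {set Ev}) (l : seq Ev) :
  (forall x y, 0 <= E2ECooc x y) ->
  (forall x t, 0 <= E2DCooc x t) ->
  (forall x, 0 <= GlobalImportance x) ->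
  0 <= lambda -> lambda <= 1 ->
  0 <= we1 -> 0 <= we2 -> 0 <= we3 -> 0 <= wd1 -> 0 <= wd2 ->
  0 < tw -> (1 <= n)%N ->
  let Rel_s := Rel Sub RE tau piRE piT E2ECooc E2DCooc GlobalImportance
                 lambda we1 we2 we3 wd1 wd2 s in
  let I := layoutI tau tw n E in
  I Tstar -> (forall T, I T -> Rel_s T <= Rel_s Tstar) ->
  greedy_run E I Rel_s l ->
  Rel_s [set x in l] >= Rel_s Tstar / 3%:R.
Proof.
move=> E2E_ge0 E2D_ge0 GI_ge0 l_ge0 l_le1 we1_ge0 we2_ge0 we3_ge0 wd1_ge0 wd2_ge0
  _ _ Rel_s I Tstar_I _ l_greedy.
have Rel_mono : set_monotone Rel_s by apply: Rel_monotone.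
have Rel_sub : submodular Rel_s by apply: Rel_submodular.
have := greedy_approximation Rel_mono Rel_sub (@layoutI_down_closed _ _ tau tw n E)
  (@layoutI_extendible _ _ tau tw n E) l_greedy Tstar_I Tstar_I.1.
by rewrite /Rel_s Rel_set0 mulr0 subr0 ler_pdivrMr ?ltr0n // mulrC.
Qed.
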